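(* Let $h_6$ be the real two-photon Lie algebra. A Lie bialgebra structure $\delta$ on $h_6$ satisfies $\delta(B_+)=0$ if and only if there exist real numbers $a_2,a_3,a_4,a_5,c_2$ with $$a_2a_3-a_5c_2=0$$ such that $\delta(X)=[1\otimes X+X\otimes 1,\,r]$ for all $X\in h_6$, where $$r=a_2\,N\wedge B_++a_3\,A_+\wedge M+a_4\,B_+\wedge M+a_5\,A_+\wedge B_++c_2\,A_+\wedge A_- .$$ Moreover, $[[r,r]]=-c_2^2\,A_+\wedge A_-\wedge M$, so $r$ is standard (nonzero Schouten bracket) if and only if $c_2\neq 0$, in which case $a_5=a_2a_3/c_2$; and $r$ satisfies the classical Yang–Baxter equation (non-standard case) if and only if $c_2=0$, in which case $a_2a_3=0$.
   Context: The two-photon Lie algebra $h_6$ is the real Lie algebra with basis $\{N,A_+,A_-,B_+,B_-,M\}$ and brackets $[N,A_+]=A_+$, $[N,A_-]=-A_-$, $[A_-,A_+]=M$, $[N,B_+]=2B_+$, $[N,B_-]=-2B_-$, $[B_-,B_+]=4N+2M$, $[A_+,B_-]=-2A_-$, $[A_+,B_+]=0$, $[A_-,B_+]=2A_+$, $[A_-,B_-]=0$, and $M$ central. A Lie bialgebra structure on a Lie algebra $g$ is a linear map $\delta:g\to g\otimes g$ which is a 1-cocycle, i.e. $\delta([X,Y])=[\delta(X),1\otimes Y+Y\otimes 1]+[1\otimes X+X\otimes 1,\delta(Y)]$, and whose dual map $g^*\otimes g^*\to g^*$ is a Lie bracket. For $r=\sum r^{ij}X_i\otimes X_j\in g\wedge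 g$, the Schouten bracket is $[[r,r]]=[r_{12},r_{13}]+[r_{12},r_{23}]+[r_{13},r_{23}]$ with $r_{12}=\sum r^{ij}X_i\otimes X_j\otimes 1$, $r_{13}=\sum r^{ij}X_i\otimes 1\otimes X_j$, $r_{23}=\sum r^{ij}1\otimes X_i\otimes X_j$. Here $X\wedge Y=X\otimes Y-Y\otimes X$. *)

(* The two-photon Lie algebra h6 over a real field R,
   realised on coordinates: g = 'rV[R]_6 with basis
   e 0 = N, e 1 = A_+, e 2 = A_-, e 3 = B_+, e 4 = B_-, e 5 = M.
   Tensors g (x) g are 6x6 matrices t (t i j = coefficient of e i (x) e j);
   tensors g (x) g (x) g are finite functions on 'I_6 * 'I_6 * 'I_6. *)
From HB Require Import structures.
From mathcomp Require Import all_boot all_order all_algebra.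
From mathcomp Require Import reals.
Set Implicit Arguments. Unset Strict Implicit. Unset Printing Implicit Defensive.
Import Order.TTheory GRing.Theory Num.Theory.
Local Open Scope ring_scope.

Section H6.
Variable R : comNzRingType.

Definition vec := 'rV[R]_6.
Definition ten2 := 'M[R]_6.
Definition ten3 := {ffun 'I_6 * 'I_6 * 'I_6 -> R}.

Definition e (i : nat) : vec := delta_mx 0 (inord i).
Definition h6N : vec := e 0.
Definition h6Ap : vec := e 1.
Definition h6Am : vec := e 2.
Definition h6Bp : vec := e 3.
Definition h6Bm : vec := e 4.
Definition h6M : vec := e 5.

(* [e i, e j] for i < j; all brackets not listed are 0:
   [N,A+]=A+, [N,A-]=-A-, [N,B+]=2B+, [N,B-]=-2B-, [A+,A-]=-M (i.e. [A-,A+]=M),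
   [A+,B-]=-2A-, [A-,B+]=2A+, [B+,B-]=-(4N+2M) (i.e. [B-,B+]=4N+2M),
   [A+,B+]=[A-,B-]=0, M central. *)
Definition br_up (i j : nat) : vec :=
  match i, j with
  | 0, 1 => e 1
  | 0, 2 => - e 2
  | 0, 3 => 2%:R *: e 3
  | 0, 4 => - (2%:R *: e 4)
  | 1, 2 => - e 5
  | 1, 4 => - (2%:R *: e 2)
  | 2, 3 => 2%:R *: e 1
  | 3, 4 => - (4%:R *: e 0 + 2%:R *: e 5)
  | _, _ => 0
  end.

Definition br_basis (i j : 'I_6) : vec :=
  if (i < j)%N then br_up i j else if (j < i)%N then - br_up j i else 0.

Definition br (X Y : vec) : vec :=
  \sum_(i < 6) \sum_(j < 6) (X 0 i * Y 0 j) *: br_basis i j.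

Definition tens (u v : vec) : ten2 := u^T *m v.
Definition wedge (u v : vec) : ten2 := tens u v - tens v u.

Definition scale3 (c : R) (t : ten3) : ten3 := [ffun p => c * t p].

Definition tens3 (u v w : vec) : ten3 :=
  [ffun p : 'I_6 * 'I_6 * 'I_6 => u 0 p.1.1 * v 0 p.1.2 * w 0 p.2].
(* u /\ v /\ w = full antisymmetrisation (no normalising factor) *)
Definition wedge3 (u v w : vec) : ten3 :=
  tens3 u v w - tens3 u w v - tens3 v u w + tens3 v w u + tens3 w u v - tens3 w v u.

Definition adt (X : vec) (t : ten2) : ten2 :=
  \sum_(a < 6) \sum_(b < 6) t a b *: (tens (br X (delta_mx 0 a)) (delta_mx 0 b)
                                      + tens (delta_mx 0 a) (br X (delta_mx 0 b))).

(* commutators in U(g) (x) U(g):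
   [1 (x) X + X (x) 1, t] = ad_X t   and   [t, 1 (x) Y + Y (x) 1] = - ad_Y t *)
Definition tcommL (X : vec) (t : ten2) : ten2 := adt X t.
Definition tcommR (t : ten2) (Y : vec) : ten2 := - adt Y t.

Definition cocycle (delta : vec -> ten2) : Prop :=
  forall X Y : vec,
    delta (br X Y) = tcommR (delta X) Y + tcommL X (delta Y).

(* the dual map g* (x) g* -> g*, with covectors in coordinates w.r.t. the
   dual basis: (xi, eta) |-> (xi (x) eta) o delta *)
Definition dual_br (delta : vec -> ten2) (xi eta : vec) : vec :=
  \row_k \sum_(i < 6) \sum_(j < 6) xi 0 i * eta 0 j * delta (delta_mx 0 k) i j.

(* the dual map is a Lie bracket (it is bilinear by construction) *)
Definition dual_is_Lie (delta : vec -> ten2) : Prop :=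
  (forall xi, dual_br delta xi xi = 0) /\
  (forall xi eta zeta,
     dual_br delta xi (dual_br delta eta zeta)
     + dual_br delta eta (dual_br delta zeta xi)
     + dual_br delta zeta (dual_br delta xi eta) = 0).

Definition lie_bialgebra (delta : {linear vec -> ten2}) : Prop :=
  cocycle delta /\ dual_is_Lie delta.

(* Schouten bracket [[r,r]] = [r12,r13] + [r12,r23] + [r13,r23] *)
Definition schouten (r : ten2) : ten3 :=
  \sum_(i < 6) \sum_(j < 6) \sum_(k < 6) \sum_(l < 6)
    scale3 (r i j * r k l)
      (tens3 (br (delta_mx 0 i) (delta_mx 0 k)) (delta_mx 0 j) (delta_mx 0 l)
     + tens3 (delta_mx 0 i) (br (delta_mx 0 j) (delta_mx 0 k)) (delta_mx 0 l)
     + tens3 (delta_mx 0 i) (delta_mx 0 k) (br (delta_mx 0 j) (delta_mx 0 l))).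

Definition r_mat (a2 a3 a4 a5 c2 : R) : ten2 :=
  a2 *: wedge h6N h6Bp + a3 *: wedge h6Ap h6M + a4 *: wedge h6Bp h6M
  + a5 *: wedge h6Ap h6Bp + c2 *: wedge h6Ap h6Am.

End H6.

(* Since ad N is diagonal (weights 0 on N and M, +1/-1 on A+/A-, +2/-2 on B+/B-), the
   cocycle identity for a pair (N, X) fixes every coordinate of delta X whose weight differs
   from that of X; the few remaining coordinates are fixed by a handful of other instances of
   the cocycle identity.  The outcome is that a cocycle with skew values and delta B+ = 0 is
   a coboundary X |-> ad_X r, where r runs over the 6-dimensional space r_inv a2 a3 a4 a5 c2 b
   of bivectors killed by ad B+, r_mat being the slice b = 0; conversely such coboundaries
   vanish on B+.  Two instances of the co-Jacobi identity then give 4 b^2 = 0 and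
   a2 a3 - a5 c2 = 0.  Finally [[r_mat, r_mat]] = -c2^2 A+/\A-/\M + (a2 a3 - a5 c2) A+/\B+/\M. *)
From HB Require Import structures.
From mathcomp Require Import all_boot all_order all_algebra.
From mathcomp Require Import reals.
From mathcomp Require Import ring lra.
From Stdlib Require Import PeanoNat.
Set Implicit Arguments. Unset Strict Implicit. Unset Printing Implicit Defensive.
Import Order.TTheory GRing.Theory Num.Theory.
Local Open Scope ring_scope.

Section Coordinates.
Context {R : comNzRingType}.
Local Notation vec := 'rV[R]_6.
Local Notation ten2 := 'M[R]_6.

(* [Nat.ltb] rather than [<] so that [cbv] evaluates it on numerals. *)
Definition skew_ext (f : nat -> nat -> R) (i j : nat) : R :=
  if Nat.ltb i j then f i j else if Nat.ltb j i then - f j i else 0.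

Lemma skew_ext_antisym (f : nat -> nat -> R) (i j : nat) :
  skew_ext f j i = - skew_ext f i j.
Proof.
rewrite /skew_ext; case: (Nat.ltb_spec i j) => ij; case: (Nat.ltb_spec j i) => ji //.
- by case: (Nat.lt_asymm _ _ ij ji).
- by rewrite opprK.
- by rewrite oppr0.
Qed.

Definition br_up_coord (i j p : nat) : R :=
  match i, j, p with
  | 0, 1, 1 => 1
  | 0, 2, 2 => -1
  | 0, 3, 3 => 2%:R
  | 0, 4, 4 => - 2%:R
  | 1, 2, 5 => -1
  | 1, 4, 2 => - 2%:R
  | 2, 3, 1 => 2%:R
  | 3, 4, 0 => - 4%:R
  | 3, 4, 5 => - 2%:R
  | _, _, _ => 0
  end.

Definition br_const (i j p : nat) : R := skew_ext (fun i j => br_up_coord i j p) i j.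

(* The [%N] matter: in [ring_scope] a bare numeral of type [nat] elaborates to a ring
   numeral, on which [cbv] cannot compute. *)
Definition sum6 (G : nat -> R) : R := G 0%N + G 1%N + G 2%N + G 3%N + G 4%N + G 5%N.

Lemma big_ord6 (G : nat -> R) : \sum_(i < 6) G i = sum6 G.
Proof. by rewrite !big_ord_recr big_ord0 /= add0r. Qed.

Lemma e_ord (k : 'I_6) : e R k = delta_mx 0 k.
Proof. by rewrite /e inord_val. Qed.

Lemma eq_inord (n : nat) (k : 'I_6) : (n < 6)%N -> (k == inord n) = (k == n :> nat).
Proof. by move=> n6; rewrite -val_eqE /= inordK. Qed.

Lemma e_coord (n : nat) (k : 'I_6) : (n < 6)%N -> e R n 0 k = (k == n :> nat)%:R.
Proof. by move=> n6; rewrite mxE eqxx eq_inord. Qed.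

Lemma sum_delta_row (n : nat) (b : 'I_n) (F : 'I_n -> R) :
  \sum_(j < n) (delta_mx 0 b : 'rV[R]_n) 0 j * F j = F b.
Proof.
rewrite (bigD1 b) //= mxE !eqxx mul1r big1 ?addr0 // => j /negbTE jb.
by rewrite mxE jb andbF mul0r.
Qed.

Lemma sum_delta_row_r (n : nat) (b : 'I_n) (F : 'I_n -> R) :
  \sum_(j < n) F j * (delta_mx 0 j : 'rV[R]_n) 0 b = F b.
Proof.
rewrite -[RHS](sum_delta_row b); apply: eq_bigr => j _.
by rewrite mulrC !mxE [b == _]eq_sym.
Qed.

Lemma br_basis_coord (i j p : 'I_6) : br_basis R i j 0 p = br_const i j p.
Proof.
case: i => [[|[|[|[|[|[|?]]]]]] //= ?]; case: j => [[|[|[|[|[|[|?]]]]]] //= ?];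
case: p => [[|[|[|[|[|[|?]]]]]] //= ?];
by rewrite /br_basis /br_const /skew_ext /= ?mxE ?eq_inord //=; ring.
Qed.

Lemma br_coord (X Y : vec) (p : 'I_6) :
  br X Y 0 p = \sum_(i < 6) \sum_(j < 6) X 0 i * Y 0 j * br_const i j p.
Proof.
rewrite summxE; apply: eq_bigr => i _; rewrite summxE; apply: eq_bigr => j _.
by rewrite mxE br_basis_coord.
Qed.

Lemma br_delta_coord (i j p : 'I_6) :
  br (delta_mx 0 i) (delta_mx 0 j) 0 p = br_const i j p.
Proof.
rewrite br_coord; under eq_bigr do under eq_bigr do rewrite -mulrA.
by under eq_bigr do rewrite -mulr_sumr sum_delta_row; rewrite sum_delta_row.
Qed.

Lemma br_delta_r_coord (X : vec) (c p : 'I_6) :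
  br X (delta_mx 0 c) 0 p = \sum_(k < 6) X 0 k * br_const k c p.
Proof.
rewrite br_coord; apply: eq_bigr => k _.
by under eq_bigr do rewrite -mulrA mulrCA; rewrite sum_delta_row.
Qed.

Lemma br_e (i j : nat) : (i < 6)%N -> (j < 6)%N ->
  br (e R i) (e R j) = \sum_(m < 6) br_const i j m *: e R m.
Proof.
move=> i6 j6; apply/rowP => p; rewrite br_delta_coord !inordK // summxE.
by under eq_bigr do rewrite mxE /e inord_val; rewrite sum_delta_row_r.
Qed.

Lemma tens_coord (u v : vec) (a b : 'I_6) : tens u v a b = u 0 a * v 0 b.
Proof. by rewrite !mxE big_ord1 !mxE. Qed.

Lemma wedge_coord (u v : vec) (a b : 'I_6) :
  wedge u v a b = u 0 a * v 0 b - v 0 a * u 0 b.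
Proof. by rewrite /wedge !(tens_coord, mxE). Qed.

Lemma adt_coord (X : vec) (t : ten2) (a b : 'I_6) :
  adt X t a b = \sum_(c < 6) t c b * br X (delta_mx 0 c) 0 a
              + \sum_(c < 6) t a c * br X (delta_mx 0 c) 0 b.
Proof.
rewrite summxE; under eq_bigr do rewrite summxE.
under eq_bigr do under eq_bigr do rewrite 2!mxE !tens_coord mulrDr.
under eq_bigr do rewrite big_split /=.
rewrite big_split /=; congr (_ + _).
  apply: eq_bigr => c _.
  by under eq_bigr do rewrite mulrA; rewrite sum_delta_row_r.
rewrite exchange_big /=; apply: eq_bigr => d _.
by under eq_bigr do rewrite mulrCA mulrC; rewrite sum_delta_row_r.
Qed.

Lemma adt_delta_coord (k : 'I_6) (t : ten2) (a b : 'I_6) :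
  adt (delta_mx 0 k) t a b = \sum_(c < 6) t c b * br_const k c a
                           + \sum_(c < 6) t a c * br_const k c b.
Proof. by rewrite adt_coord; congr (_ + _); apply: eq_bigr => c _; rewrite br_delta_coord. Qed.

Lemma adt_linear (X : vec) (t : ten2) :
  adt X t = \sum_(k < 6) X 0 k *: adt (delta_mx 0 k) t.
Proof.
apply/matrixP => a b; rewrite adt_coord summxE.
under [RHS]eq_bigr do rewrite mxE adt_delta_coord mulrDr.
rewrite big_split /=.
by congr (_ + _); under eq_bigr do rewrite br_delta_r_coord mulr_sumr;
  rewrite exchange_big /=; apply: eq_bigr => k _; rewrite mulr_sumr;
  apply: eq_bigr => c _; rewrite mulrCA.
Qed.

Lemma adt_skew (t : ten2) : (forall i j, t j i = - t i j) ->
  forall (X : vec) a b, adt X t b a = - adt X t a b.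
Proof.
move=> ts X a b; rewrite !adt_coord opprD addrC -!sumrN.
by congr (_ + _); apply: eq_bigr => c _; rewrite ts mulNr.
Qed.

Definition ad_coord (t : nat -> nat -> R) (k a b : nat) : R :=
  sum6 (fun c => t c b * br_const k c a + t a c * br_const k c b).

Lemma adt_e_coord (t : ten2) (f : nat -> nat -> R) (k : nat) :
  (forall i j : 'I_6, t i j = f i j) -> (k < 6)%N ->
  forall a b : 'I_6, adt (e R k) t a b = ad_coord f k a b.
Proof.
move=> tf k6 a b; rewrite adt_delta_coord -big_split /ad_coord -big_ord6.
by apply: eq_bigr => c _; rewrite !tf inordK.
Qed.

End Coordinates.

Section InvariantBivectors.
Context {R : comNzRingType}.

Definition r_inv (a2 a3 a4 a5 c2 b : R) : 'M[R]_6 :=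
  r_mat a2 a3 a4 a5 c2
  + b *: (wedge (h6Ap R) (h6M R) - wedge (h6N R) (h6Ap R) - wedge (h6Am R) (h6Bp R)).

Lemma r_inv0 (a2 a3 a4 a5 c2 : R) : r_inv a2 a3 a4 a5 c2 0 = r_mat a2 a3 a4 a5 c2.
Proof. by rewrite /r_inv scale0r addr0. Qed.

Definition r_inv_coord (a2 a3 a4 a5 c2 b : R) : nat -> nat -> R :=
  skew_ext (fun i j => match i, j with
                       | 0, 1 => - b | 0, 3 => a2 | 1, 2 => c2 | 1, 3 => a5
                       | 1, 5 => a3 + b | 2, 3 => - b | 3, 5 => a4
                       | _, _ => 0
                       end).

Lemma r_inv_coordE (a2 a3 a4 a5 c2 b : R) (i j : 'I_6) :
  r_inv a2 a3 a4 a5 c2 b i j = r_inv_coord a2 a3 a4 a5 c2 b i j.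
Proof.
rewrite !(wedge_coord, e_coord, mxE) //.
case: i => [[|[|[|[|[|[|?]]]]]] //= ?]; case: j => [[|[|[|[|[|[|?]]]]]] //= ?];
by rewrite /r_inv_coord /skew_ext /=; ring.
Qed.

Lemma r_inv_skew (a2 a3 a4 a5 c2 b : R) (i j : 'I_6) :
  r_inv a2 a3 a4 a5 c2 b j i = - r_inv a2 a3 a4 a5 c2 b i j.
Proof. by rewrite !r_inv_coordE; apply: skew_ext_antisym. Qed.

Lemma adt_Bp_r_inv (a2 a3 a4 a5 c2 b : R) : adt (h6Bp R) (r_inv a2 a3 a4 a5 c2 b) = 0.
Proof.
apply/matrixP => i j; rewrite mxE (adt_e_coord (r_inv_coordE a2 a3 a4 a5 c2 b)) //.
case: i j => [[|[|[|[|[|[|?]]]]]] //= ?] [[|[|[|[|[|[|?]]]]]] //= ?];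
by cbv beta iota zeta delta
     [ad_coord sum6 r_inv_coord br_const br_up_coord skew_ext Nat.ltb Nat.leb]; ring.
Qed.

End InvariantBivectors.

Section Schouten.
Context {R : comNzRingType}.
Local Notation vec := 'rV[R]_6.
Local Notation dlt j b := ((delta_mx 0 j : vec) 0 b).

Lemma scale3_0 (t : ten3 R) : scale3 0 t = 0.
Proof. by apply/ffunP => p; rewrite !ffunE mul0r. Qed.

Lemma scale3_wedge3_eq0 (x : R) :
  scale3 x (wedge3 (h6Ap R) (h6Am R) (h6M R)) = 0 -> x = 0.
Proof.
move=> /ffunP/(_ (inord 1, inord 2, inord 5)).
by rewrite !(e_coord, ffunE) //= !inordK //= => <-; ring.
Qed.

Lemma sum_collapse (n : nat) (b : 'I_n) (F G : 'I_n -> R) (x : R) :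
  (forall j, F j = G j * (delta_mx 0 j : 'rV[R]_n) 0 b) -> G b = x ->
  \sum_(j < n) F j = x.
Proof. by move=> FG <-; under eq_bigr do rewrite FG; rewrite sum_delta_row_r. Qed.

Lemma schouten_entry (r : 'M[R]_6) (a b c : 'I_6) :
  schouten r (a, b, c) =
    \sum_(i < 6) \sum_(k < 6) r i b * r k c * br_const i k a
  + \sum_(i < 6) \sum_(k < 6) r a i * r k c * br_const i k b
  + \sum_(i < 6) \sum_(k < 6) r a i * r b k * br_const i k c.
Proof.
transitivity (\sum_(i < 6) \sum_(j < 6) \sum_(k < 6) \sum_(l < 6)
   (r i j * r k l * (br_const i k a * dlt j b * dlt l c)
  + r i j * r k l * (dlt i a * br_const j k b * dlt l c)
  + r i j * r k l * (dlt i a * dlt k b * br_const j l c))).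
  rewrite sum_ffunE; apply: eq_bigr => i _; rewrite sum_ffunE; apply: eq_bigr => j _.
  rewrite sum_ffunE; apply: eq_bigr => k _; rewrite sum_ffunE; apply: eq_bigr => l _.
  by rewrite !ffunE /= !br_delta_coord; ring.
under eq_bigr do under eq_bigr do under eq_bigr do rewrite !big_split.
under eq_bigr do under eq_bigr do rewrite !big_split.
under eq_bigr do rewrite !big_split.
rewrite !big_split /=; congr (_ + _ + _).
- apply: eq_bigr => i _.
  apply: (@sum_collapse _ b _ (fun j => \sum_(k < 6) r i j * r k c * br_const i k a))
    => [j|//].
  rewrite mulr_suml; apply: eq_bigr => k _.
  apply: (@sum_collapse _ c _ (fun l => r i j * r k l * br_const i k a * dlt j b))
    => [l|//].
  ring.
- apply: (@sum_collapse _ a _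
           (fun i => \sum_(j < 6) \sum_(k < 6) r i j * r k c * br_const j k b)) => [i|//].
  rewrite mulr_suml; apply: eq_bigr => j _; rewrite mulr_suml; apply: eq_bigr => k _.
  apply: (@sum_collapse _ c _ (fun l => r i j * r k l * br_const j k b * dlt i a))
    => [l|//].
  ring.
- apply: (@sum_collapse _ a _
           (fun i => \sum_(j < 6) \sum_(l < 6) r i j * r b l * br_const j l c)) => [i|//].
  rewrite mulr_suml; apply: eq_bigr => j _.
  apply: (@sum_collapse _ b _
           (fun k => \sum_(l < 6) r i j * r k l * br_const j l c * dlt i a)) => [k|].
    by rewrite mulr_suml; apply: eq_bigr => l _; ring.
  by rewrite mulr_suml.
Qed.

Definition schouten_coord (f : nat -> nat -> R) (a b c : nat) : R :=
  sum6 (fun i => sum6 (fun k => f i b * f k c * br_const i k a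
                              + f a i * f k c * br_const i k b
                              + f a i * f b k * br_const i k c)).

Lemma schouten_entry_coord (r : 'M[R]_6) (f : nat -> nat -> R) (a b c : 'I_6) :
  (forall i j : 'I_6, r i j = f i j) -> schouten r (a, b, c) = schouten_coord f a b c.
Proof.
move=> rf; rewrite schouten_entry /schouten_coord -big_ord6 -!big_split.
apply: eq_bigr => i _; rewrite -big_ord6 -!big_split.
by apply: eq_bigr => k _; rewrite !rf.
Qed.

Lemma schouten_r_mat (a2 a3 a4 a5 c2 : R) :
  schouten (r_mat a2 a3 a4 a5 c2)
  = scale3 (- c2 ^+ 2) (wedge3 (h6Ap R) (h6Am R) (h6M R))
  + scale3 (a2 * a3 - a5 * c2) (wedge3 (h6Ap R) (h6Bp R) (h6M R)).
Proof.
apply/ffunP => -[[a b] c].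
rewrite -r_inv0 (schouten_entry_coord _ _ _ (r_inv_coordE a2 a3 a4 a5 c2 0)).
rewrite !(e_coord, ffunE) //=.
case: a b c => [[|[|[|[|[|[|?]]]]]] //= ?] [[|[|[|[|[|[|?]]]]]] //= ?]
               [[|[|[|[|[|[|?]]]]]] //= ?];
by cbv beta iota zeta delta
     [schouten_coord sum6 r_inv_coord br_const br_up_coord skew_ext Nat.ltb Nat.leb]; ring.
Qed.

End Schouten.

Section SkewMatrices.
Context {R : numDomainType}.

Lemma skew_mx_eq (n : nat) (A B : 'M[R]_n) :
  (forall i j, A j i = - A i j) -> (forall i j, B j i = - B i j) ->
  (forall i j : 'I_n, (i < j)%N -> A i j = B i j) -> A = B.
Proof.
have skew_diag (M : 'M[R]_n) j : (forall i j, M j i = - M i j) -> M j j = 0.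
  move=> Ms; have : M j j *+ 2 = 0 by rewrite mulr2n {1}Ms addNr.
  by move/eqP; rewrite mulrn_eq0 /= => /eqP.
move=> As Bs AB; apply/matrixP => i j.
case: (ltngtP i j) => [ij|ji|/val_inj ->]; first exact: AB.
  by rewrite As Bs AB.
by rewrite !skew_diag.
Qed.

End SkewMatrices.

Section DualBracket.
Context {R : comNzRingType}.
Local Notation vec := 'rV[R]_6.
Variable delta : {linear vec -> 'M[R]_6}.

Lemma dual_br_delta_l (a k : 'I_6) (v : vec) :
  dual_br delta (delta_mx 0 a) v 0 k = \sum_(j < 6) v 0 j * delta (delta_mx 0 k) a j.
Proof.
rewrite mxE; under eq_bigr do under eq_bigr do rewrite -!mulrA.
by under eq_bigr do rewrite -mulr_sumr; rewrite sum_delta_row.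
Qed.

Lemma dual_br_delta (a b k : 'I_6) :
  dual_br delta (delta_mx 0 a) (delta_mx 0 b) 0 k = delta (delta_mx 0 k) a b.
Proof. by rewrite dual_br_delta_l sum_delta_row. Qed.

Lemma dual_brDl (x y v : vec) :
  dual_br delta (x + y) v = dual_br delta x v + dual_br delta y v.
Proof.
apply/rowP => k; rewrite !mxE -big_split; apply: eq_bigr => i _.
by rewrite -big_split; apply: eq_bigr => j _; rewrite mxE !mulrDl.
Qed.

Lemma dual_brDr (x y v : vec) :
  dual_br delta v (x + y) = dual_br delta v x + dual_br delta v y.
Proof.
apply/rowP => k; rewrite !mxE -big_split; apply: eq_bigr => i _.
by rewrite -big_split; apply: eq_bigr => j _; rewrite mxE mulrDr mulrDl.
Qed.

Hypothesis delta_dual : dual_is_Lie delta.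

Lemma delta_basis_diag (k a : 'I_6) : delta (delta_mx 0 k) a a = 0.
Proof. by rewrite -dual_br_delta (proj1 delta_dual) mxE. Qed.

Lemma delta_basis_skew (k a b : 'I_6) :
  delta (delta_mx 0 k) b a = - delta (delta_mx 0 k) a b.
Proof.
have := congr1 (fun xi : vec => xi 0 k)
  ((proj1 delta_dual) (delta_mx 0 a + delta_mx 0 b)).
rewrite dual_brDl !dual_brDr !(dual_br_delta, mxE) !delta_basis_diag add0r addr0.
by move/eqP; rewrite addrC addr_eq0 => /eqP.
Qed.

Lemma dual_jacobi_coord (a b c k : 'I_6) :
  \sum_(j < 6) (delta (e R j) b c * delta (e R k) a j
                + delta (e R j) c a * delta (e R k) b j
                + delta (e R j) a b * delta (e R k) c j) = 0.
Proof.
have J := congr1 (fun xi : vec => xi 0 k)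
  ((proj2 delta_dual) (delta_mx 0 a) (delta_mx 0 b) (delta_mx 0 c)).
rewrite !(dual_br_delta_l, mxE) in J; rewrite !big_split -[RHS]J e_ord.
by congr (_ + _ + _); apply: eq_bigr => j _; rewrite !e_ord dual_br_delta.
Qed.

End DualBracket.

Section CocycleSolution.
Context {R : realFieldType}.
Local Notation vec := 'rV[R]_6.
Variable delta : {linear vec -> 'M[R]_6}.
Hypothesis delta_bialg : lie_bialgebra delta.
Hypothesis delta_Bp : delta (h6Bp R) = 0.

Let delta_skew := delta_basis_skew (proj2 delta_bialg).

(* Only meaningful for indices below 6: [inord] sends the others to 0. *)
Definition coord (k a b : nat) : R := delta (e R k) (inord a) (inord b).

Definition coord_canon (k a b : nat) : R :=
  if Nat.eqb k 3%N then 0 else skew_ext (coord k) a b.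

Lemma coord_canonE (k a b : nat) :
  (a < 6)%N -> (b < 6)%N -> coord k a b = coord_canon k a b.
Proof.
move=> a6 b6; rewrite /coord_canon /skew_ext.
case: (Nat.eqb_spec k 3%N) => [->|_]; first by rewrite /coord delta_Bp mxE.
case: (Nat.ltb_spec a b) => // ba; case: (Nat.ltb_spec b a) => [ab|ab].
  by rewrite /coord /e delta_skew.
have -> : b = a by exact: Nat.le_antisymm.
by have := delta_skew (inord k) (inord a) (inord a); rewrite /coord /e; lra.
Qed.

Lemma delta_e_coord_canon (k : nat) (a b : 'I_6) : delta (e R k) a b = coord_canon k a b.
Proof. by rewrite -coord_canonE // /coord !inord_val. Qed.

Lemma cocycle_coord (i j p q : nat) :
  (i < 6)%N -> (j < 6)%N -> (p < 6)%N -> (q < 6)%N ->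
  sum6 (fun m => br_const i j m * coord_canon m p q)
  = ad_coord (coord_canon j) i p q - ad_coord (coord_canon i) j p q.
Proof.
move=> i6 j6 p6 q6.
have := congr1 (fun t : 'M[R]_6 => t (inord p) (inord q))
  ((proj1 delta_bialg) (e R i) (e R j)).
rewrite /tcommR /tcommL !(adt_e_coord (delta_e_coord_canon _), mxE) // !inordK //.
rewrite addrC => <-; rewrite br_e // linear_sum summxE -big_ord6.
by apply: eq_bigr => m _; rewrite linearZ mxE -coord_canonE.
Qed.

(* From here on, numerals are coordinate indices; see [sum6]. *)
Local Open Scope nat_scope.

Definition da2 : R := (- coord 4 3 4 / 2%:R)%R.
Definition da3 : R := (coord 4 2 5 / 2%:R)%R.
Definition da4 : R := ((coord 4 0 5 + coord 4 3 4) / 4%:R)%R.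
Definition da5 : R := (coord 4 2 3 / 2%:R)%R.
Definition dc2 : R := (- coord 2 2 5)%R.
Definition db : R := (coord 4 1 4 / 2%:R)%R.

Definition r_delta : 'M[R]_6 := r_inv da2 da3 da4 da5 dc2 db.
Definition r_delta_coord : nat -> nat -> R := r_inv_coord da2 da3 da4 da5 dc2 db.

Ltac expand := cbv beta iota zeta delta
  [sum6 ad_coord coord_canon br_const br_up_coord skew_ext Nat.ltb Nat.leb Nat.eqb].

Ltac expand_all := cbv beta iota zeta delta
  [sum6 ad_coord coord_canon r_delta_coord r_inv_coord br_const br_up_coord skew_ext
   Nat.ltb Nat.leb Nat.eqb da2 da3 da4 da5 dc2 db] in *.

Ltac cocycle_at i j p q :=
  move: (@cocycle_coord i j p q erefl erefl erefl erefl); expand.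

Ltac cocycle_step rw i j p q := cocycle_at i j p q; rw => ?; expand_all; lra.

(* The instance (N, e_k) at entry (a, b) reads
   (w_k - w_a - w_b) coord k a b = (terms in the coordinates of delta N),
   so it settles every entry whose weight does not match that of e_k. *)
Ltac cocycle_at_N :=
  match goal with |- coord ?k ?a ?b = _ => cocycle_at 0 k a b end.

Lemma coord_deltaM a b : a < b -> b < 6 -> coord 5 a b = ad_coord r_delta_coord 5 a b.
Proof.
have e534 : coord 5 3 4 = 0%R by cocycle_at 1 2 3 4 => ?; lra.
have e505 : coord 5 0 5 = 0%R by cocycle_at 3 5 3 5 => ?; lra.
have e512 : coord 5 1 2 = 0%R by cocycle_at 1 5 1 5 => ?; lra.
case: a b => [|[|[|[|[|[|?]]]]]] [|[|[|[|[|[|?]]]]]] //= _ _;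
  by cocycle_at_N => ?; expand_all; lra.
Qed.

Lemma coord_deltaN a b : a < b -> b < 6 -> coord 0 a b = ad_coord r_delta_coord 0 a b.
Proof.
have e034 : coord 0 3 4 = 0%R by cocycle_step ltac:(rewrite ?coord_deltaM //) 0 1 2 3.
have e024 : coord 0 2 4 = 0%R by cocycle_step ltac:(rewrite ?coord_deltaM //) 0 3 0 2.
have e002 : coord 0 0 2 = 0%R by cocycle_step ltac:(rewrite ?coord_deltaM //) 0 3 2 3.
have e014 : coord 0 1 4 = 0%R by cocycle_step ltac:(rewrite ?coord_deltaM //) 0 3 0 1.
have e025 : coord 0 2 5 = 0%R by cocycle_step ltac:(rewrite ?coord_deltaM //) 0 3 1 5.
have e004 : coord 0 0 4 = 0%R by cocycle_step ltac:(rewrite ?coord_deltaM //) 0 3 3 4.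
have e045 : coord 0 4 5 = 0%R by cocycle_step ltac:(rewrite ?coord_deltaM //) 0 3 0 5.
have e005 : coord 0 0 5 = 0%R by cocycle_step ltac:(rewrite ?coord_deltaM //) 0 3 3 5.
have e012 : coord 0 1 2 = 0%R by cocycle_step ltac:(rewrite ?coord_deltaM //) 0 1 1 5.
have e001 : coord 0 0 1 = (- db)%R by cocycle_step ltac:(rewrite ?coord_deltaM //) 0 4 1 4.
have e023 : coord 0 2 3 = (- db)%R by cocycle_step ltac:(rewrite ?coord_deltaM //) 0 3 1 3.
have e013 : coord 0 1 3 = (3%:R * da5)%R
  by cocycle_step ltac:(rewrite ?coord_deltaM //) 0 4 2 3.
have e015 : coord 0 1 5 = (da3 + db)%R
  by cocycle_step ltac:(rewrite ?coord_deltaM //) 0 4 2 5.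
have e003 : coord 0 0 3 = (2%:R * da2)%R
  by cocycle_step ltac:(rewrite ?coord_deltaM //) 0 4 3 4.
have e035 : coord 0 3 5 = (2%:R * da4)%R
  by cocycle_step ltac:(rewrite ?coord_deltaM //) 0 4 0 5.
by case: a b => [|[|[|[|[|[|?]]]]]] [|[|[|[|[|[|?]]]]]] //= _ _; expand_all; lra.
Qed.

Lemma coord_deltaBm a b : a < b -> b < 6 -> coord 4 a b = ad_coord r_delta_coord 4 a b.
Proof.
have e404 : coord 4 0 4 = 0%R
  by cocycle_step ltac:(rewrite ?coord_deltaM ?coord_deltaN //) 3 4 3 4.
have e445 : coord 4 4 5 = 0%R
  by cocycle_step ltac:(rewrite ?coord_deltaM ?coord_deltaN //) 3 4 0 5.
case: a b => [|[|[|[|[|[|?]]]]]] [|[|[|[|[|[|?]]]]]] //= _ _;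
  by cocycle_at_N; rewrite ?coord_deltaM ?coord_deltaN // => ?; expand_all; lra.
Qed.

Lemma coord_deltaA k a b : (k == 1) || (k == 2) -> a < b -> b < 6 ->
  coord k a b = ad_coord r_delta_coord k a b.
Proof.
cocycle_at 1 2 0 5; cocycle_at 1 2 1 2; cocycle_at 1 3 1 3; cocycle_at 1 4 1 4;
cocycle_at 1 4 2 5; rewrite ?coord_deltaM ?coord_deltaN ?coord_deltaBm // => b1 b2 b3 b4 b5.
expand_all.
have e101 : coord 1 0 1 = 0%R by lra.
have e115 : coord 1 1 5 = (- dc2)%R by expand_all; lra.
have e123 : coord 1 2 3 = 0%R by lra.
have e202 : coord 2 0 2 = 0%R by lra.
have e214 : coord 2 1 4 = 0%R by lra.
clear b1 b2 b3 b4 b5.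
case: k => [|[|[|?]]] //= _; case: a b => [|[|[|[|[|[|?]]]]]] [|[|[|[|[|[|?]]]]]] //= _ _;
  by cocycle_at_N; rewrite ?coord_deltaM ?coord_deltaN ?coord_deltaBm // => ?;
     expand_all; lra.
Qed.

Lemma coord_coboundary k a b : k < 6 -> k != 3 -> a < b -> b < 6 ->
  coord k a b = ad_coord r_delta_coord k a b.
Proof.
case: k => [|[|[|[|[|[|?]]]]]] //= _ _.
- exact: coord_deltaN.
- by apply: coord_deltaA.
- by apply: coord_deltaA.
- exact: coord_deltaBm.
- exact: coord_deltaM.
Qed.

Lemma delta_e_coboundary k : k < 6 -> delta (e R k) = adt (e R k) r_delta.
Proof.
move=> k6; have [->|k3] := eqVneq k 3; first by rewrite delta_Bp adt_Bp_r_inv.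
apply: skew_mx_eq => [i j|i j|i j ij]; first exact: delta_skew.
  exact: (adt_skew (r_inv_skew _ _ _ _ _ _)).
rewrite delta_e_coord_canon (adt_e_coord (r_inv_coordE _ _ _ _ _ _)) //.
rewrite /coord_canon /skew_ext.
have -> : Nat.eqb k 3 = false by apply/Nat.eqb_neq/eqP.
have -> : Nat.ltb i j = true by apply/Nat.ltb_lt/ssrnat.ltP.
exact: coord_coboundary.
Qed.

Lemma delta_coboundary (X : vec) : delta X = adt X r_delta.
Proof.
rewrite {1}(row_sum_delta X) linear_sum adt_linear; apply: eq_bigr => k _.
by rewrite linearZ -e_ord delta_e_coboundary.
Qed.

Lemma coord_canon_coboundary k a b : k < 6 -> a < 6 -> b < 6 ->
  coord_canon k a b = ad_coord r_delta_coord k a b.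
Proof.
move=> k6 a6 b6; rewrite -coord_canonE // /coord delta_e_coboundary //.
by rewrite (adt_e_coord (r_inv_coordE _ _ _ _ _ _)) // !inordK.
Qed.

Lemma jacobi_coord_canon a b c k : a < 6 -> b < 6 -> c < 6 -> k < 6 ->
  sum6 (fun j => coord_canon j b c * coord_canon k a j
                 + coord_canon j c a * coord_canon k b j
                 + coord_canon j a b * coord_canon k c j)%R = 0%R.
Proof.
move=> a6 b6 c6 k6; rewrite -big_ord6.
rewrite -[RHS](dual_jacobi_coord (proj2 delta_bialg) (inord a) (inord b) (inord c) (inord k)).
by apply: eq_bigr => j _; rewrite !delta_e_coord_canon !inordK.
Qed.

Ltac jacobi_at a b c k :=
  move: (@jacobi_coord_canon a b c k erefl erefl erefl erefl);
  cbv beta delta [sum6]; rewrite !coord_canon_coboundary //;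
  cbv beta iota zeta delta
    [ad_coord sum6 r_delta_coord r_inv_coord br_const br_up_coord skew_ext Nat.ltb Nat.leb].

Lemma db_eq0 : db = 0%R.
Proof.
jacobi_at 0 1 2 4 => J.
have : (4%:R * db ^+ 2 = 0)%R by rewrite -[RHS]J; ring.
by move/eqP; rewrite mulf_eq0 pnatr_eq0 expf_eq0 /= => /eqP.
Qed.

Lemma delta_params_rel : (da2 * da3 - da5 * dc2 = 0)%R.
Proof.
jacobi_at 0 1 5 4; rewrite db_eq0 => J.
have : (- 4%:R * (da2 * da3 - da5 * dc2) = 0)%R by rewrite -[RHS]J; ring.
by move/eqP; rewrite mulf_eq0 oppr_eq0 pnatr_eq0 /= => /eqP.
Qed.

Lemma delta_coboundary_r_mat : exists a2 a3 a4 a5 c2 : R,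
  (a2 * a3 - a5 * c2 = 0)%R /\ forall X : vec, delta X = tcommL X (r_mat a2 a3 a4 a5 c2).
Proof.
exists da2, da3, da4, da5, dc2; split; first exact: delta_params_rel.
by move=> X; rewrite delta_coboundary /r_delta db_eq0 r_inv0.
Qed.

End CocycleSolution.

Theorem mainTheorem3 (R : realType) :
  (forall delta : {linear 'rV[R]_6 -> 'M[R]_6},
     lie_bialgebra delta ->
     (delta (h6Bp R) = 0 <->
      exists a2 a3 a4 a5 c2 : R,
        a2 * a3 - a5 * c2 = 0 /\
        forall X : 'rV[R]_6, delta X = tcommL X (r_mat a2 a3 a4 a5 c2)))
  /\
  (forall a2 a3 a4 a5 c2 : R,
     a2 * a3 - a5 * c2 = 0 ->
     [/\ schouten (r_mat a2 a3 a4 a5 c2)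
           = scale3 (- (c2 ^+ 2)) (wedge3 (h6Ap R) (h6Am R) (h6M R)),
         schouten (r_mat a2 a3 a4 a5 c2) != 0 <-> c2 != 0,
         c2 != 0 -> a5 = a2 * a3 / c2,
         schouten (r_mat a2 a3 a4 a5 c2) = 0 <-> c2 = 0
       & c2 = 0 -> a2 * a3 = 0]).
Proof.
split=> [delta bialg|a2 a3 a4 a5 c2 rel].
  split=> [delta_Bp|[a2 [a3 [a4 [a5 [c2 [_ ->]]]]]]].
    exact: delta_coboundary_r_mat bialg delta_Bp.
  by rewrite /tcommL -r_inv0 adt_Bp_r_inv.
have schE : schouten (r_mat a2 a3 a4 a5 c2)
            = scale3 (- c2 ^+ 2) (wedge3 (h6Ap R) (h6Am R) (h6M R)).
  by rewrite schouten_r_mat rel scale3_0 addr0.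
have sch0 : schouten (r_mat a2 a3 a4 a5 c2) = 0 <-> c2 = 0.
  rewrite schE; split=> [/scale3_wedge3_eq0/eqP|->].
    by rewrite oppr_eq0 expf_eq0 /= => /eqP.
  by rewrite expr2 mul0r oppr0 scale3_0.
have rel' : a2 * a3 = a5 * c2 by apply/eqP; rewrite -subr_eq0 rel.
split => //.
- by split=> /eqP nz; apply/eqP => z; apply: nz; apply/sch0.
- by move=> c2nz; rewrite rel' mulfK.
- by move=> c20; rewrite rel' c20 mulr0.
Qed.
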